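(* If $\mathscr{S}$ is a relaxed scenario, then $G_{=}(\mathscr{S})$ is a perfect graph.
   Context: All trees are planted phylogenetic trees: a tree $T$ has a distinguished vertex $0_T$ of degree $1$ whose unique neighbor $\rho_T$ is the root, and every vertex other than $0_T$ and the leaves $L(T)$ has at least two children. For $x,y\in V(T)$ write $y\preceq_T x$ if $x$ lies on the path from $0_T$ to $y$; edges are written $uv$ with $v\prec_T u$. $\mathrm{lca}_T$ denotes the last common ancestor. A time map for $T$ is $\tau_T\colon V(T)\to\mathbb{R}$ with $\tau_T(x)<\tau_T(y)$ whenever $x\prec_T y$. A relaxed scenario $\mathscr{S}=(T,S,\sigma,\mu,\tau_T,\tau_S)$ consists of a gene tree $T$ with time map $\tau_T$, a species tree $S$ with time map $\tau_S$, a map $\sigma\colon L(T)\to M$ with $M\subseteq L(S)$, and a map $\mu\colon V(T)\to V(S)\cup E(S)$ such that (S0) $\mu(x)=0_S$ iff $x=0_T$; (S1) $\mu(x)\in L(S)$ iff $x\in L(T)$, in which case $\mu(x)=\sigma(x)$; (S2) if $\mu(x)\in V(S)$ then $\tau_S(\mu(x))=\tau_T(x)$; (S3) if $\mu(x)=uv\in E(S)$ then $\tau_S(v)<\tau_T(x)<\tau_S(u)$. The EDT graph $G_{=}(\mathscr{S})$ has vertex set $L(T)$ and an edge $xy$ ($x\ne y$) iff $\tau_T(\mathrm{lca}_T(x,y))=\tau_S(\mathrm{lca}_S(\sigma(x),\sigma(y)))$. *)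

From HB Require Import structures.
From mathcomp Require Import all_boot all_order all_algebra.
From mathcomp Require Import reals.
Set Implicit Arguments. Unset Strict Implicit. Unset Printing Implicit Defensive.
Import Order.TTheory GRing.Theory Num.Theory.

(* A tree is given by its vertex finType, the planted vertex 0_T and the parent
   map par (par 0_T = 0_T).  The edges are {par v, v} for v <> 0_T.  Every vertex
   reaches 0_T by iterating par, so the graph is a tree rooted at 0_T. *)

Definition childrenP (V : finType) (z : V) (p : V -> V) (v : V) : {set V} :=
  [set u | (u != z) && (p u == v)].

Record planted_tree := PlantedTree {
  vert :> finType;
  zero : vert;
  par : vert -> vert;
  par_zero : par zero = zero;
  reach_zero : forall v, fconnect par v zero;
  zero_deg1 : #|childrenP zero par zero| = 1;
  inner_ge2 : forall v, v != zero -> childrenP zero par v != set0 ->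
              2 <= #|childrenP zero par v|
}.

Definition children (T : planted_tree) (v : T) : {set T} :=
  childrenP (zero T) (@par T) v.

(* leaves L(T): vertices without children (0_T always has one child) *)
Definition leaves (T : planted_tree) : {set T} :=
  [set v : T | children v == set0].

(* y \preceq_T x : x lies on the path from 0_T to y *)
Definition tle (T : planted_tree) (y x : T) : bool := fconnect (@par T) y x.
Definition tlt (T : planted_tree) (y x : T) : bool := (y != x) && tle y x.

Definition is_lca (T : planted_tree) (x y z : T) : bool :=
  [&& tle x z, tle y z & [forall w : T, (tle x w && tle y w) ==> tle z w]].

Definition time_map (R : realType) (T : planted_tree) (tau : T -> R) : Prop :=
  forall x y : T, tlt x y -> (tau x < tau y)%R.

(* mu x = inl s  means  mu(x) = s \in V(S);
   mu x = inr v  means  mu(x) = the edge (par v) v of S (requires v <> 0_S). *)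
Definition relaxed_scenario (R : realType) (T S : planted_tree)
  (sigma : T -> S) (mu : T -> S + S) (tauT : T -> R) (tauS : S -> R) : Prop :=
  time_map tauT /\ time_map tauS /\
      (forall x, x \in leaves T -> sigma x \in leaves S) /\
      (forall x v, mu x = inr v -> v != zero S) /\
      (forall x, mu x = inl (zero S) <-> x = zero T) /\
      (forall x, (exists2 s, mu x = inl s & s \in leaves S) <-> x \in leaves T) /\
      (forall x, x \in leaves T -> mu x = inl (sigma x)) /\
      (forall x s, mu x = inl s -> tauS s = tauT x) /\
      (forall x v, mu x = inr v -> (tauS v < tauT x)%R /\ (tauT x < tauS (par v))%R).

Definition edt_rel (R : realType) (T S : planted_tree)
  (sigma : T -> S) (tauT : T -> R) (tauS : S -> R) : rel T :=
  fun x y => (x != y) && [exists z : T, exists z' : S,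
     [&& is_lca x y z, is_lca (sigma x) (sigma y) z' & tauT z == tauS z']].

Section Graphs.
Variable V : finType.
Variable e : rel V.

Definition is_clique (K : {set V}) : bool :=
  [forall x in K, forall y in K, (x != y) ==> e x y].

Definition clique_number (A : {set V}) : nat :=
  \max_(K : {set V} | (K \subset A) && is_clique K) #|K|.

Definition proper_colouring (A : {set V}) (f : {ffun V -> 'I_#|V|}) : bool :=
  [forall x in A, forall y in A, ((x != y) && e x y) ==> (f x != f y)].

(* chromatic number: least number of colours used by a proper colouring
   (#|V| colours always suffice) *)
Definition chromatic_number (A : {set V}) : nat :=
  \big[minn/#|V|]_(f : {ffun V -> 'I_#|V|} | proper_colouring A f) #|f @: A|.

Definition perfect_on (W : {set V}) : Prop :=
  forall A : {set V}, A \subset W -> chromatic_number A = clique_number A.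
End Graphs.

From mathcomp Require Import all_boot all_order all_algebra.
From mathcomp Require Import reals.

(* Proof: a graph is perfect as soon as every nonempty vertex set A contains a
   stable set meeting all maximum cliques of A, since colouring it with one new
   colour lowers the clique number.  For the EDT graph, x ~ y iff x != y and
   d1 x y = d2 x y, where d1 x y = tau_T (lca_T x y) and
   d2 x y = tau_S (lca_S (sigma x) (sigma y)) are both ultrametric.  Let t be
   the largest value of max (d1, d2) on pairs of distinct vertices of A, and
   call x, y r-close (c-close) if d1 x y < t (d2 x y < t).  Both are
   equivalences, edges join only vertices that are both or neither r- and
   c-close, and by the choice of t vertices that are neither are adjacent.
   So a maximum clique is a disjoint union of maximum cliques of cells
   (classes of "r- and c-close"), taken from distinct r-classes and distinct
   c-classes.  An exchange argument along alternating sequences of cells shows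
   that, for a fixed x, either every maximum clique meets the r-class of x or
   every one meets its c-class; the union of the inductively given stable sets
   of the cells inside that class is the required stable set. *)

Set Implicit Arguments. Unset Strict Implicit. Unset Printing Implicit Defensive.
Import Order.TTheory.

Section StrongStableSets.
Variables (V : finType) (e : rel V).
Implicit Types (A B I K L : {set V}) (x y z : V) (f g : {ffun V -> 'I_#|V|}).

Definition stable I := {in I &, forall x y, x != y -> ~~ e x y}.

Definition max_clique A K :=
  [&& K \subset A, is_clique e K & #|K| == clique_number e A].

Definition strong_stable A I :=
  [/\ I \subset A, stable I & forall K, max_clique A K -> K :&: I != set0].

Lemma cliqueP K : reflect {in K &, forall x y, x != y -> e x y} (is_clique e K).
Proof.
apply: (iffP forallP) => [cK x y xK yK | cK x]; last first.
  by apply/implyP => xK; apply/forall_inP => y yK; apply/implyP; apply: cK.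
by move/implyP/(_ xK)/forall_inP/(_ y yK)/implyP: (cK x).
Qed.

Lemma clique_set1 x : is_clique e [set x].
Proof. by apply/cliqueP => y z /set1P-> /set1P->; rewrite eqxx. Qed.

Lemma clique_subset K L : K \subset L -> is_clique e L -> is_clique e K.
Proof.
by move=> /subsetP sKL /cliqueP cL; apply/cliqueP => x y /sKL xL /sKL; apply: cL.
Qed.

Lemma leq_clique_number A K :
  K \subset A -> is_clique e K -> #|K| <= clique_number e A.
Proof. by move=> sKA cK; apply: leq_bigmax_cond; rewrite sKA cK. Qed.

Lemma clique_number_le_card A : clique_number e A <= #|A|.
Proof. by apply/bigmax_leqP => K /andP[sKA _]; apply: subset_leq_card. Qed.

Lemma exists_max_clique A : exists K, max_clique A K.
Proof.
have cl0 : (set0 \subset A) && is_clique e set0.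
  by rewrite sub0set; apply/cliqueP => x y; rewrite inE.
rewrite /max_clique /clique_number (bigop.bigmax_eq_arg set0 cl0).
by case: arg_maxnP => // K /andP[sKA cK] _; exists K; rewrite sKA cK eqxx.
Qed.

Lemma strong_stable_set1 x : strong_stable [set x] [set x].
Proof.
split=> // [y z /set1P-> /set1P->|K /and3P[sKx _ /eqP cardK]]; first by rewrite eqxx.
rewrite (setIidPl sKx) -card_gt0 cardK.
by apply: leq_trans (leq_clique_number (subxx _) (clique_set1 x)); rewrite cards1.
Qed.

Lemma clique_number_setD A I :
  strong_stable A I -> clique_number e (A :\: I) < clique_number e A.
Proof.
case=> _ _ meetI; have [K /and3P[sKAI cK /eqP <-]] := exists_max_clique (A :\: I).
have /andP[sKA disjKI] : (K \subset A) && [disjoint K & I] by rewrite -subsetD.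
rewrite ltn_neqAle leq_clique_number // andbT; apply/eqP => cardK.
by move: (meetI K); rewrite /max_clique sKA cK cardK eqxx setI_eq0 disjKI => /(_ isT).
Qed.

Lemma proper_colouringP A f :
  reflect {in A &, forall x y, x != y -> e x y -> f x != f y} (proper_colouring e A f).
Proof.
apply: (iffP forall_inP) => [colf x y xA yA neq_xy exy | colf x xA].
  by move/forall_inP/(_ y yA)/implyP: (colf x xA); apply; rewrite neq_xy.
by apply/forall_inP => y yA; apply/implyP => /andP[]; apply: colf.
Qed.

Lemma chromatic_number_le A f :
  proper_colouring e A f -> chromatic_number e A <= #|f @: A|.
Proof.
by move=> colf; rewrite /chromatic_number -minEnat; apply: (@bigmin_le_cond _ nat).
Qed.

Lemma clique_number_le_chromatic A : clique_number e A <= chromatic_number e A.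
Proof.
rewrite /chromatic_number; elim/big_ind: _ => [||f colf].
- exact: leq_trans (clique_number_le_card A) (max_card _).
- by move=> m n leAm leAn; rewrite leq_min leAm leAn.
have [K /and3P[sKA /cliqueP cK /eqP <-]] := exists_max_clique A.
have injf : {in K &, injective f}.
  move=> x y xK yK; apply: contra_eq => neq_xy.
  by move/proper_colouringP: colf; apply; rewrite ?(subsetP sKA) ?cK.
by rewrite -(card_in_imset injf) subset_leq_card // imsetS.
Qed.

Lemma exists_unused_colour B g : #|g @: B| < #|V| -> exists i, i \notin g @: B.
Proof.
move=> small; apply/existsP; rewrite -negb_forall.
apply: contraTN small => /forallP all_used.
by rewrite -leqNgt -{1}(card_ord #|V|) subset_leq_card //; apply/subsetP => i _.
Qed.

Section Recolouring.
Variables (A I : {set V}) (g : {ffun V -> 'I_#|V|}) (i : 'I_#|V|).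
Hypotheses (stI : stable I) (colg : proper_colouring e (A :\: I) g).
Hypothesis unused_i : i \notin g @: (A :\: I).

Let f := [ffun x => if x \in I then i else g x].

Lemma proper_colouring_recolour : proper_colouring e A f.
Proof.
have used x : x \in A -> x \notin I -> g x != i.
  by move=> xA xI; apply: contraNneq unused_i => <-; rewrite imset_f // inE xI.
apply/proper_colouringP => x y xA yA neq_xy exy; rewrite !ffunE.
case: ifPn => xI; case: ifPn => yI.
- by move: exy; rewrite (negbTE (stI xI yI neq_xy)).
- by rewrite eq_sym used.
- by rewrite used.
by move/proper_colouringP: colg; apply; rewrite ?inE ?xI ?yI.
Qed.

Lemma card_recolour : #|f @: A| <= #|g @: (A :\: I)|.+1.
Proof.
rewrite -add1n -(cards1 i); apply: leq_trans (leq_card_setU _ _); apply: subset_leq_card.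
apply/subsetP => _ /imsetP[x xA ->]; rewrite ffunE !inE.
by case: ifPn => xI; rewrite ?eqxx // imset_f ?orbT // inE xI.
Qed.

End Recolouring.

Hypothesis strong_stable_exists : forall A, A != set0 -> exists I, strong_stable A I.

Lemma optimal_colouring A :
  exists f, proper_colouring e A f /\ #|f @: A| <= clique_number e A.
Proof.
have [n] := ubnP #|A|; elim: n A => // n IH A ltAn.
have [-> | nzA] := eqVneq A set0.
  exists [ffun x => enum_rank x]; split; last by rewrite imset0 cards0.
  by apply/proper_colouringP => x; rewrite inE.
have [I ssI] := strong_stable_exists nzA; have [_ stI _] := ssI.
have ltAI : #|A :\: I| < n.
  apply: leq_trans (ltnSE ltAn); apply: proper_card.
  rewrite properEneq subsetDl andbT; apply/eqP => eqAI.
  by move: (clique_number_setD ssI); rewrite eqAI ltnn.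
have [g [colg card_g]] := IH _ ltAI.
have lt_g : #|g @: (A :\: I)| < clique_number e A.
  exact: leq_ltn_trans card_g (clique_number_setD ssI).
have [i unused_i] : exists i, i \notin g @: (A :\: I).
  apply/exists_unused_colour/(leq_trans lt_g).
  exact: leq_trans (clique_number_le_card A) (max_card _).
exists [ffun x => if x \in I then i else g x]; split.
  exact: proper_colouring_recolour.
exact: leq_trans (card_recolour A I g i) lt_g.
Qed.

Lemma perfect_of_strong_stable W : perfect_on e W.
Proof.
move=> A _; apply/eqP; rewrite eqn_leq clique_number_le_chromatic andbT.
have [f [colf card_f]] := optimal_colouring A.
exact: leq_trans (chromatic_number_le colf) card_f.
Qed.

End StrongStableSets.

Lemma eqv_nrel (T : Type) (q : rel T) : symmetric q -> transitive q ->
  forall u a b, q u b -> ~~ q u a -> ~~ q a b.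
Proof.
by move=> q_sym q_trans u a b qub; apply: contraNN => qab; rewrite (q_trans _ _ _ qub) // q_sym.
Qed.

Section Cells.
Variables (V : finType) (e : rel V) (A : {set V}) (r c : rel V).
Implicit Types (K L N : {set V}) (u v w x y z : V).
Hypotheses (r_refl : reflexive r) (r_sym : symmetric r) (r_trans : transitive r).
Hypotheses (c_refl : reflexive c) (c_sym : symmetric c) (c_trans : transitive c).
Hypothesis edge_rc : forall x y, e x y -> r x y = c x y.
Hypothesis apart_edge : {in A &, forall x y, ~~ r x y -> ~~ c x y -> e x y}.

Definition cell y := [set z | r y z && c y z].

Lemma cell_id y : y \in cell y.
Proof. by rewrite inE r_refl c_refl. Qed.

Lemma clique_rc K x y : is_clique e K -> x \in K -> y \in K -> r x y = c x y.
Proof.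
move=> /cliqueP cK xK yK; have [-> | neq_xy] := eqVneq x y; first by rewrite r_refl c_refl.
exact/edge_rc/cK.
Qed.

Lemma clique_cell_r K y z : is_clique e K -> y \in K -> z \in K -> (z \in cell y) = r y z.
Proof. by move=> cK yK zK; rewrite inE -(clique_rc cK yK zK) andbb. Qed.

Lemma clique_cell_c K y z : is_clique e K -> y \in K -> z \in K -> (z \in cell y) = c y z.
Proof. by move=> cK yK zK; rewrite inE (clique_rc cK yK zK) andbb. Qed.

Definition apart x y := ~~ r x y && ~~ c x y.

Lemma apart_classes u v a b : r u b -> c v b -> ~~ r u a -> ~~ c v a -> apart a b.
Proof.
move=> rub cvb nrua ncva.
by rewrite /apart (eqv_nrel r_sym r_trans rub nrua) (eqv_nrel c_sym c_trans cvb ncva).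
Qed.

Lemma clique_setU K L : K \subset A -> L \subset A -> is_clique e K -> is_clique e L ->
  {in K & L, forall x y, apart x y} -> is_clique e (K :|: L).
Proof.
move=> /subsetP sKA /subsetP sLA /cliqueP cK /cliqueP cL apartKL.
have edgeKL x y : x \in K -> y \in L -> e x y /\ e y x.
  move=> xK yL; have /andP[nrxy ncxy] := apartKL x y xK yL.
  have [xA yA] := (sKA x xK, sLA y yL).
  by split; apply: apart_edge; rewrite // 1?r_sym 1?c_sym.
apply/cliqueP => x y /setUP[xK|xL] /setUP[yK|yL]; first exact: cK.
- by have [] := edgeKL x y xK yL.
- by have [] := edgeKL y x yK xL.
exact: cL.
Qed.

Lemma card_setU_apart K L :
  {in K & L, forall x y, apart x y} -> #|K :|: L| = #|K| + #|L|.
Proof.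
move=> apartKL; apply/eqP; rewrite (leq_card_setU K L).2.
apply/pred0P => x /=; apply/negbTE/andP => -[xK xL].
by move: (apartKL x x xK xL); rewrite /apart r_refl.
Qed.

(* Obtained by swapping cells along an alternating sequence of r- and c-classes,
   as for augmenting paths of matchings (see [exchange_cons]). *)
Definition clique_exchange K1 K2 v N1 N2 :=
  [/\ N1 :|: N2 \subset K1 :|: K2, is_clique e N1, is_clique e N2,
      #|N1| + #|N2| = #|K1| + #|K2|
    & {in N2, forall z, ~~ c v z /\ exists2 w, w \in K1 & r z w}].

Section Exchange.
Variables (K1 K2 : {set V}) (v : V).
Hypotheses (sK1A : K1 \subset A) (sK2A : K2 \subset A).
Hypotheses (cK1 : is_clique e K1) (cK2 : is_clique e K2).
Hypothesis K2_nc : {in K2, forall z, ~~ c v z}.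

Lemma exchange_swap : {in K1, forall z, ~~ c v z} -> clique_exchange K1 K2 v K2 K1.
Proof.
move=> K1_nc; split; rewrite 1?setUC 1?addnC // => z zK1.
by split; [apply: K1_nc | exists z].
Qed.

Variables (y : V) (yK1 : y \in K1) (cvy : c v y).

Lemma cell_classes b : b \in K1 :&: cell y -> r y b && c v b.
Proof. by rewrite !inE => /and3P[_ -> cyb]; apply: c_trans cvy cyb. Qed.

Lemma outside_cell_classes a : a \in K1 :\: cell y -> ~~ r y a && ~~ c v a.
Proof.
move=> /setDP[aK1 ay]; move: (ay); rewrite (clique_cell_r cK1 yK1 aK1) => -> /=.
apply: contra ay => cva; rewrite (clique_cell_c cK1 yK1 aK1).
by apply: c_trans cva; rewrite c_sym.
Qed.

Lemma exchange_last : {in K2, forall z, ~~ r y z} ->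
  clique_exchange K1 K2 v (K2 :|: K1 :&: cell y) (K1 :\: cell y).
Proof.
move=> K2_nr.
have apartK2P : {in K2 & K1 :&: cell y, forall a b, apart a b}.
  move=> a b aK2 /cell_classes/andP[ryb cvb].
  exact: apart_classes ryb cvb (K2_nr a aK2) (K2_nc aK2).
split.
- by rewrite -setUA setID setUC.
- apply: clique_setU sK2A (subset_trans (subsetIl _ _) sK1A) cK2 _ apartK2P.
  exact: clique_subset (subsetIl _ _) cK1.
- exact: clique_subset (subsetDl _ _) cK1.
- by rewrite card_setU_apart // -(cardsID (cell y) K1) -addnA addnC.
move=> z zK1'; have /andP[_ ncvz] := outside_cell_classes zK1'.
by split=> //; exists z; [case/setDP: zK1' | rewrite r_refl].
Qed.

Lemma exchange_cons y2 N1 N2 : y2 \in K2 -> r y y2 ->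
    clique_exchange (K1 :\: cell y) (K2 :\: cell y2) y2 N1 N2 ->
  clique_exchange K1 K2 v (N1 :|: K1 :&: cell y) (N2 :|: K2 :&: cell y2).
Proof.
move=> y2K2 ryy2 [sN cN1 cN2 cardN N2_classes].
have sNK : N1 :|: N2 \subset K1 :|: K2.
  exact: subset_trans sN (setUSS (subsetDl _ _) (subsetDl _ _)).
have /subUsetP[sN1A sN2A] : N1 :|: N2 \subset A.
  by apply: subset_trans sNK _; rewrite subUset sK1A.
have Q_classes b : b \in K2 :&: cell y2 -> r y b && c y2 b.
  by rewrite !inE => /and3P[_ ry2b ->]; rewrite andbT; apply: r_trans ryy2 ry2b.
have N_classes a : a \in N1 :|: N2 -> ~~ r y a && ~~ c v a.
  move=> /(subsetP sN) /setUP[/outside_cell_classes // | /setDP[aK2 ay2]].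
  rewrite K2_nc // andbT; apply: contra ay2 => rya.
  by rewrite (clique_cell_r cK2 y2K2 aK2); apply: r_trans rya; rewrite r_sym.
have apartN1P : {in N1 & K1 :&: cell y, forall a b, apart a b}.
  move=> a b aN1 /cell_classes/andP[ryb cvb].
  have /andP[nrya ncva] := N_classes a (subsetP (subsetUl _ _) a aN1).
  exact: apart_classes ryb cvb nrya ncva.
have apartN2Q : {in N2 & K2 :&: cell y2, forall a b, apart a b}.
  move=> a b aN2 /Q_classes/andP[ryb cy2b].
  have /andP[nrya _] := N_classes a (subsetP (subsetUr _ _) a aN2).
  by have [ncy2a _] := N2_classes a aN2; apply: apart_classes ryb cy2b nrya ncy2a.
split.
- by rewrite setUACA subUset sNK setUSS ?subsetIl.
- apply: clique_setU sN1A (subset_trans (subsetIl _ _) sK1A) cN1 _ apartN1P.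
  exact: clique_subset (subsetIl _ _) cK1.
- apply: clique_setU sN2A (subset_trans (subsetIl _ _) sK2A) cN2 _ apartN2Q.
  exact: clique_subset (subsetIl _ _) cK2.
- rewrite !card_setU_apart // -(cardsID (cell y) K1) -(cardsID (cell y2) K2).
  by rewrite addnACA cardN addnC addnACA.
move=> z /setUP[zN2 | zQ].
  have [ncy2z [w /setDP[wK1 _] rzw]] := N2_classes z zN2.
  by have /andP[_ ->] := N_classes z (subsetP (subsetUr _ _) z zN2); split=> //; exists w.
have zK2 : z \in K2 by case/setIP: zQ.
by have /andP[ryz _] := Q_classes z zQ; split; [apply: K2_nc | exists y; rewrite // r_sym].
Qed.

End Exchange.

Lemma exists_clique_exchange K1 K2 v : K1 \subset A -> K2 \subset A ->
    is_clique e K1 -> is_clique e K2 -> {in K2, forall z, ~~ c v z} ->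
  exists N1 N2, clique_exchange K1 K2 v N1 N2.
Proof.
have [n] := ubnP #|K1|; elim: n K1 K2 v => // n IH K1 K2 v ltK1n sK1A sK2A cK1 cK2 K2_nc.
have [/exists_inP[y yK1 cvy] | /exists_inPn K1_nc] := boolP [exists y in K1, c v y]; last first.
  by exists K2, K1; apply: exchange_swap.
have [/exists_inP[y2 y2K2 ryy2] | /exists_inPn K2_nr] := boolP [exists y2 in K2, r y y2].
  2: by exists (K2 :|: K1 :&: cell y), (K1 :\: cell y); apply: exchange_last.
have ltK1' : #|K1 :\: cell y| < n.
  apply: leq_trans (ltnSE ltK1n); apply/proper_card/properP; split; first exact: subsetDl.
  by exists y; rewrite // inE cell_id.
have K2'_nc : {in K2 :\: cell y2, forall z, ~~ c y2 z}.
  by move=> z /setDP[zK2]; rewrite (clique_cell_c cK2 y2K2 zK2).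
have [N1 [N2 exN]] := IH _ (K2 :\: cell y2) y2 ltK1' (subset_trans (subsetDl _ _) sK1A)
  (subset_trans (subsetDl _ _) sK2A) (clique_subset (subsetDl _ _) cK1)
  (clique_subset (subsetDl _ _) cK2) K2'_nc.
by exists (N1 :|: K1 :&: cell y), (N2 :|: K2 :&: cell y2); apply: exchange_cons exN.
Qed.

Lemma max_cliques_apart x K1 K2 : x \in A -> max_clique e A K1 -> max_clique e A K2 ->
  {in K1, forall z, ~~ r x z} -> {in K2, forall z, ~~ c x z} -> False.
Proof.
move=> xA /and3P[sK1A cK1 /eqP cardK1] /and3P[sK2A cK2 /eqP cardK2] K1_nr K2_nc.
have [N1 [N2 [sN cN1 cN2 cardN N2_classes]]] :=
  exists_clique_exchange sK1A sK2A cK1 cK2 K2_nc.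
have /subUsetP[sN1A sN2A] : N1 :|: N2 \subset A.
  by apply: subset_trans sN _; rewrite subUset sK1A.
have apart_xN2 : {in [set x] & N2, forall a b, apart a b}.
  move=> _ z /set1P-> zN2; have [ncxz [w wK1 rzw]] := N2_classes z zN2.
  by rewrite /apart ncxz andbT; apply: contra (K1_nr w wK1) => rxz; apply: r_trans rxz rzw.
have sxA : [set x] \subset A by rewrite sub1set.
have cl_xN2 := clique_setU sxA sN2A (clique_set1 e x) cN2 apart_xN2.
have := leq_add (leq_clique_number sN1A cN1)
  (leq_clique_number (introT subUsetP (conj sxA sN2A)) cl_xN2).
by rewrite card_setU_apart // cards1 addnCA cardN -{1}cardK1 -cardK2 add1n ltnn.
Qed.

Lemma max_cliques_meet_class x : x \in A ->
  (forall K, max_clique e A K -> exists2 y, y \in K & r x y) \/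
  (forall K, max_clique e A K -> exists2 y, y \in K & c x y).
Proof.
move=> xA.
have [/forallP meet_r | ] := boolP [forall K, max_clique e A K ==> [exists y in K, r x y]].
  by left=> K /(implyP (meet_r K)) /exists_inP.
rewrite negb_forall => /existsP[K1]; rewrite negb_imply => /andP[mK1 /exists_inPn K1_nr].
right=> K2 mK2; apply/exists_inP; apply: contraT => /exists_inPn K2_nc.
by case: (max_cliques_apart xA mK1 mK2 K1_nr K2_nc).
Qed.

Lemma cell_eq y z : z \in cell y -> cell z = cell y.
Proof.
rewrite inE => /andP[ryz cyz]; have [rzy czy] : r z y /\ c z y by rewrite r_sym c_sym.
apply/setP => w; rewrite !inE; apply/andP/andP => -[rw cw].
  by split; [apply: r_trans ryz rw | apply: c_trans cyz cw].
by split; [apply: r_trans rzy rw | apply: c_trans czy cw].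
Qed.

Lemma max_clique_cell K y : max_clique e A K -> y \in K ->
  max_clique e (A :&: cell y) (K :&: cell y).
Proof.
move=> /and3P[sKA cK /eqP cardK] yK.
have sKC : K :&: cell y \subset A :&: cell y by apply: setSI.
have cKC : is_clique e (K :&: cell y) := clique_subset (subsetIl _ _) cK.
rewrite /max_clique sKC cKC eqn_leq leq_clique_number //=.
have [L /and3P[sLC cL /eqP <-]] := exists_max_clique e (A :&: cell y).
have apartKL : {in K :\: cell y & L, forall a b, apart a b}.
  move=> a b /setDP[aK ay] /(subsetP sLC) /setIP[_]; rewrite inE => /andP[ryb cyb].
  move: (ay); rewrite (clique_cell_r cK yK aK) => nrya.
  move: ay; rewrite (clique_cell_c cK yK aK) => ncya.
  exact: apart_classes ryb cyb nrya ncya.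
have sK'A : K :\: cell y \subset A := subset_trans (subsetDl _ _) sKA.
have sLA : L \subset A := subset_trans sLC (subsetIl _ _).
have := leq_clique_number (introT subUsetP (conj sK'A sLA))
  (clique_setU sK'A sLA (clique_subset (subsetDl _ _) cK) cL apartKL).
by rewrite card_setU_apart // -cardK -(cardsID (cell y) K) addnC leq_add2r.
Qed.

Lemma stable_bigcup_class q x F : q = r \/ q = c ->
    (forall y, y \in A -> strong_stable e (A :&: cell y) (F (A :&: cell y))) ->
  stable e (\bigcup_(y in A | q x y) F (A :&: cell y)).
Proof.
move=> q_rc ssF a b /bigcupP[y1 /andP[y1A qxy1] aF] /bigcupP[y2 /andP[y2A qxy2] bF] neq_ab.
have q_sym : symmetric q by case: q_rc => ->.
have q_trans : transitive q by case: q_rc => ->.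
have q_cell y z : z \in cell y -> q y z by case: q_rc => ->; rewrite inE => /andP[].
have [sF1 stF1 _] := ssF y1 y1A; have [sF2 _ _] := ssF y2 y2A.
have /setIP[_ ay1] := subsetP sF1 a aF; have /setIP[_ by2] := subsetP sF2 b bF.
apply/negP => eab.
have qab : q a b.
  have qay1 : q a y1 by rewrite q_sym q_cell.
  have qy1x : q y1 x by rewrite q_sym.
  exact: q_trans _ _ _ (q_trans _ _ _ qay1 (q_trans _ _ _ qy1x qxy2)) (q_cell _ _ by2).
have ba : b \in cell a.
  move/edge_rc: (eab) qab => rc_ab; rewrite inE -rc_ab andbb.
  by case: q_rc => -> //; rewrite rc_ab.
have same_cell : cell y2 = cell y1 by rewrite -(cell_eq by2) (cell_eq ba) (cell_eq ay1).
by move: bF; rewrite same_cell => /(stF1 a b aF)/(_ neq_ab); rewrite eab.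
Qed.

Lemma strong_stable_class q x F : q = r \/ q = c ->
    (forall y, y \in A -> strong_stable e (A :&: cell y) (F (A :&: cell y))) ->
    (forall K, max_clique e A K -> exists2 y, y \in K & q x y) ->
  strong_stable e A (\bigcup_(y in A | q x y) F (A :&: cell y)).
Proof.
move=> q_rc ssF meet_q; split.
- apply/bigcupsP => y /andP[yA _]; have [sFy _ _] := ssF y yA.
  exact: subset_trans sFy (subsetIl _ _).
- exact: stable_bigcup_class q_rc ssF.
move=> K mK; have [y yK qxy] := meet_q K mK.
have yA : y \in A by case/and3P: mK => /subsetP sKA _ _; apply: sKA.
have [_ _ meetF] := ssF y yA.
have /set0Pn[z /setIP[/setIP[zK _] zF]] := meetF _ (max_clique_cell mK yK).
by apply/set0Pn; exists z; rewrite inE zK; apply/bigcupP; exists y; rewrite ?yA.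
Qed.

Lemma strong_stable_of_cells x : x \in A ->
    (forall y, y \in A -> exists I, strong_stable e (A :&: cell y) I) ->
  exists I, strong_stable e A I.
Proof.
move=> xA ss_cells.
(* [F] takes the cell itself, not a representative, so that equal cells get equal
   stable sets. *)
have [F ssF] : exists F : {set V} -> {set V},
    forall y, y \in A -> strong_stable e (A :&: cell y) (F (A :&: cell y)).
  have /fin_all_exists[F ssF] : forall B : {set V},
      exists I, [exists y in A, B == A :&: cell y] -> strong_stable e B I.
    move=> B.
    have [/exists_inP[y yA /eqP->] | _] := boolP [exists y in A, B == A :&: cell y].
      by have [I ssI] := ss_cells y yA; exists I.
    by exists set0.
  by exists F => y yA; apply: ssF; apply/exists_inP; exists y.
have [meet_r | meet_c] := max_cliques_meet_class xA; eexists.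
  exact: strong_stable_class (or_introl erefl) ssF meet_r.
exact: strong_stable_class (or_intror erefl) ssF meet_c.
Qed.

End Cells.

Section Ultrametric.
Variables (disp : Order.disp_t) (R : orderType disp) (V : finType).
Implicit Types (d : V -> V -> R) (t : R) (x y z : V) (A : {set V}).
Local Open Scope order_scope.

Definition ultrametric d := forall x y z, d x z <= Order.max (d x y) (d y z).

(* The values [d x x] play no role, hence the disjunct [x == y]. *)
Definition within d t : rel V := fun x y => (x == y) || (d x y < t).

Lemma within_refl d t : reflexive (within d t).
Proof. by move=> x; rewrite /within eqxx. Qed.

Lemma within_sym d t : (forall x y, d x y = d y x) -> symmetric (within d t).
Proof. by move=> d_sym x y; rewrite /within eq_sym d_sym. Qed.

Lemma within_trans d t : ultrametric d -> transitive (within d t).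
Proof.
move=> d_ultra y x z; rewrite /within.
case: (eqVneq x y) => [-> // | _ /= ltxy].
case: (eqVneq y z) => [<- | _ /= ltyz]; first by rewrite ltxy orbT.
by apply/orP; right; apply: le_lt_trans (d_ultra x y z) _; rewrite gt_max ltxy.
Qed.

Variables (e : rel V) (d1 d2 : V -> V -> R).
Hypothesis edgeE : forall x y, e x y = (x != y) && (d1 x y == d2 x y).
Hypotheses (d1_sym : forall x y, d1 x y = d1 y x) (d2_sym : forall x y, d2 x y = d2 y x).
Hypotheses (d1_ultra : ultrametric d1) (d2_ultra : ultrametric d2).

Lemma within_edge t x y : e x y -> within d1 t x y = within d2 t x y.
Proof. by rewrite edgeE /within => /andP[/negbTE-> /eqP->]. Qed.

Lemma edge_of_far t A :
    {in A &, forall x y, x != y -> Order.max (d1 x y) (d2 x y) <= t} ->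
  {in A &, forall x y, ~~ within d1 t x y -> ~~ within d2 t x y -> e x y}.
Proof.
move=> le_t x y xA yA; rewrite /within !negb_or -!leNgt => /andP[neq_xy ge1] /andP[_ ge2].
move: (le_t x y xA yA neq_xy); rewrite ge_max edgeE neq_xy => /andP[le1 le2].
by apply/eqP; rewrite (@le_anti _ _ (d1 x y) t) ?le1 // (@le_anti _ _ (d2 x y) t) ?le2.
Qed.

Lemma cell_proper t y A a b : a \in A -> b \in A -> a != b ->
    t <= Order.max (d1 a b) (d2 a b) ->
  A :&: cell (within d1 t) (within d2 t) y \proper A.
Proof.
move=> aA bA neq_ab le_t; apply/properP; split; first exact: subsetIl.
have rW := within_trans (t := t) d1_ultra; have cW := within_trans (t := t) d2_ultra.
have [ay | ya] := boolP (a \in cell (within d1 t) (within d2 t) y); last first.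
  by exists a; rewrite // inE negb_and ya orbT.
move: ay; rewrite inE => /andP[r1 c1].
exists b; rewrite // inE negb_and; apply/orP; right.
apply: contraL le_t; rewrite inE => /andP[r2 c2].
have /orP[/idPn//|lt1] : within d1 t a b by apply: (rW y) r2; rewrite (within_sym t d1_sym).
have /orP[/idPn//|lt2] : within d2 t a b by apply: (cW y) c2; rewrite (within_sym t d2_sym).
by rewrite -ltNge gt_max lt1 lt2.
Qed.

Lemma ultrametric_strong_stable A : A != set0 -> exists I, strong_stable e A I.
Proof.
have [n] := ubnP #|A|; elim: n A => // n IH A ltAn /set0Pn[a aA].
have [Aa | /set0Pn[b /setD1P[neq_ba bA]]] := eqVneq (A :\ a) set0.
  by exists A; rewrite -(setD1K aA) Aa setU0; apply: strong_stable_set1.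
pose P := [pred p : V * V | [&& p.1 \in A, p.2 \in A & p.1 != p.2]].
pose D p := Order.max (d1 p.1 p.2) (d2 p.1 p.2).
have Pba : P (b, a) by rewrite /P /= bA aA neq_ba.
case: (arg_maxP D Pba) => -[a' b'] /and3P[/= a'A b'A neq_ab'] D_max.
pose t := D (a', b').
have le_t : {in A &, forall x y, x != y -> Order.max (d1 x y) (d2 x y) <= t}.
  by move=> x y xA yA neq_xy; apply: (D_max (x, y)); rewrite /P /= xA yA neq_xy.
apply: (strong_stable_of_cells (within_refl d1 t) (within_sym t d1_sym)
  (within_trans d1_ultra) (within_refl d2 t) (within_sym t d2_sym) (within_trans d2_ultra)
  (@within_edge t) (edge_of_far le_t) aA) => y yA.
apply: IH; last by apply/set0Pn; exists y; rewrite !inE yA !within_refl.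
exact: leq_trans (proper_card (cell_proper y a'A b'A neq_ab' (lexx t))) (ltnSE ltAn).
Qed.

End Ultrametric.

Section Lca.
Variable T : planted_tree.
Implicit Types x y z w : T.

Lemma tle_trans x y z : tle x y -> tle y z -> tle x z.
Proof. exact: connect_trans. Qed.

Lemma tle_findex x a b : tle x a -> tle x b ->
  findex (@par T) x a <= findex (@par T) x b -> tle a b.
Proof.
move=> xa xb le_ab; rewrite /tle -(iter_findex xa) -(iter_findex xb).
by rewrite -(subnK le_ab) iterD; apply: fconnect_iter.
Qed.

Lemma tle_total x a b : tle x a -> tle x b -> tle a b || tle b a.
Proof.
move=> xa xb.
case: (leqP (findex (@par T) x a) (findex (@par T) x b)) => [le_ab | /ltnW le_ba].
  by rewrite (tle_findex xa xb le_ab).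
by rewrite (tle_findex xb xa le_ba) orbT.
Qed.

Definition lca x y : T :=
  [arg min_(w < zero T | tle x w && tle y w) findex (@par T) x w].

Lemma lcaP x y : is_lca x y (lca x y).
Proof.
rewrite /lca; case: arg_minnP => [|l /andP[xl yl] l_min]; first by rewrite /tle !reach_zero.
rewrite /is_lca xl yl; apply/forall_inP => w /andP[xw yw] /=.
by apply: (tle_findex xl xw); apply: l_min; rewrite xw yw.
Qed.

Variables (R : realType) (tau : T -> R).
Hypothesis tau_time : time_map tau.

Lemma time_mono x y : tle x y -> (tau x <= tau y)%R.
Proof.
move=> xy; have [-> // | neq_xy] := eqVneq x y.
by apply/ltW/tau_time; rewrite /tlt neq_xy.
Qed.

Lemma time_lca x y z : is_lca x y z -> tau z = tau (lca x y).
Proof.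
move=> /and3P[xz yz /forall_inP z_min]; have /and3P[xl yl /forall_inP l_min] := lcaP x y.
have zl : tle z (lca x y) by apply: z_min; rewrite xl yl.
have lz : tle (lca x y) z by apply: l_min; rewrite xz yz.
by apply/le_anti; rewrite !time_mono.
Qed.

Lemma time_lcaC x y : tau (lca x y) = tau (lca y x).
Proof.
apply: time_lca; have /and3P[xl yl /forall_inP l_min] := lcaP x y.
by rewrite /is_lca yl xl; apply/forall_inP => w; rewrite andbC; apply: l_min.
Qed.

Lemma time_lca_ultrametric : ultrametric (fun x y => tau (lca x y)).
Proof.
move=> x y z; rewrite le_max.
have /and3P[xl1 yl1 _] := lcaP x y; have /and3P[yl2 zl2 _] := lcaP y z.
have /and3P[_ _ /forall_inP l_min] := lcaP x z.
case/orP: (tle_total yl1 yl2) => [l12 | l21].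
  by apply/orP; right; apply/time_mono/l_min; rewrite zl2 (tle_trans xl1 l12).
by apply/orP; left; apply/time_mono/l_min; rewrite xl1 (tle_trans zl2 l21).
Qed.

End Lca.

Lemma edt_relE (R : realType) (T S : planted_tree) (sigma : T -> S)
    (tauT : T -> R) (tauS : S -> R) : time_map tauT -> time_map tauS ->
  forall x y, edt_rel sigma tauT tauS x y =
    (x != y) && (tauT (lca x y) == tauS (lca (sigma x) (sigma y))).
Proof.
move=> timeT timeS x y; rewrite /edt_rel; congr (_ && _); apply/existsP/eqP.
  case=> z /existsP[z' /and3P[lz lz' /eqP eq_z]].
  by rewrite -(time_lca timeT lz) -(time_lca timeS lz').
move=> eq_lca; exists (lca x y); apply/existsP; exists (lca (sigma x) (sigma y)).
by rewrite !lcaP eq_lca eqxx.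
Qed.

Theorem proposition4 (R : realType) (T S : planted_tree)
  (sigma : T -> S) (mu : T -> S + S) (tauT : T -> R) (tauS : S -> R) :
  relaxed_scenario sigma mu tauT tauS ->
  perfect_on (edt_rel sigma tauT tauS) (leaves T).
Proof.
move=> [timeT [timeS _]]; apply: perfect_of_strong_stable => A.
apply: (ultrametric_strong_stable (edt_relE sigma timeT timeS)).
- exact: time_lcaC.
- by move=> x y; apply: time_lcaC.
- exact: time_lca_ultrametric.
by move=> x y z; apply: time_lca_ultrametric.
Qed.
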